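(* Let $p\ge5$. For every assignment $\alpha$ on the white metallic tree, $\mathcal W_\alpha$ possesses the preferred son property: for every node $\nu$, exactly one son of $\nu$ in $\mathcal W_\alpha$ has metallic code ending with $0$, and the metallic code of that son is the metallic code of $\nu$ followed by $0$ (this son is called the preferred son of $\nu$). Moreover, for every $n\ge0$, $m_{n+1}$ is the preferred son of $m_n$ in $\mathcal W_\alpha$.
   Context: Fix $p\ge5$. Metallic numbers: $m_{-1}=0$, $m_0=1$, $m_{n+2}=(p-2)m_{n+1}-m_n$. With $d=p-3$, $c=p-4$, the metallic code of a positive integer $n$ is the unique word $a_k\cdots a_0$ over $\{0,\dots,p-3\}$ with $a_k\ne0$, $n=\sum a_im_i$, containing no factor $d\,c^j\,d$ ($j\ge0$). White metallic tree under an assignment $\alpha$, $\mathcal W_\alpha$: nodes are the positive integers, each black or white; root $1$ is white; nodes are processed in increasing order and node $\nu$ receives $p-2$ sons if white and $p-3$ sons if black, namely the smallest integers not yet used, in increasing order; an assignment specifies, for each node, the position (leftmost = $1$) of its unique black son among its sons (possibly depending on the node), other sons being white. *)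

From mathcomp Require Import all_boot.
Set Implicit Arguments. Unset Strict Implicit. Unset Printing Implicit Defensive.

(* Metallic numbers: m_{-1} = 0, m_0 = 1, m_{n+2} = (p-2) m_{n+1} - m_n.
   metal_pair p n = (m_{n-1}, m_n).  For p >= 5 the sequence is increasing,
   so the truncated subtraction never truncates. *)
Fixpoint metal_pair (p n : nat) : nat * nat :=
  match n with
  | 0 => (0, 1)
  | n'.+1 => let: (a, b) := metal_pair p n' in (b, (p - 2) * b - a)
  end.

Definition metal (p n : nat) : nat := (metal_pair p n).2.

(* Words are written most significant digit first: w = [:: a_k; ...; a_0]. *)
Definition word_value (p : nat) (w : seq nat) : nat :=
  \sum_(i < size w) nth 0 (rev w) i * metal p i.

(* w contains a factor d c^j d, with d = p-3, c = p-4. *)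
Definition has_forbidden_factor (p : nat) (w : seq nat) : Prop :=
  exists j : nat, infix ((p - 3) :: rcons (nseq j (p - 4)) (p - 3)) w.

Definition is_metallic_code (p n : nat) (w : seq nat) : Prop :=
  [/\ all (fun a => a <= p - 3) w, head 0 w != 0, word_value p w = n
    & ~ has_forbidden_factor p w].

Definition code_ends0 (p n : nat) : Prop :=
  exists w, is_metallic_code p n w /\ last 1 w = 0.

(* ---- White metallic tree W_alpha ----
   Nodes are positive integers; node x is stored at index x-1 of a colour list
   (true = white, false = black).  build p alpha n = colours of nodes
   1, 2, ..., L after nodes 1..n have been processed (received their sons).
   Node nu receives p-2 sons if white, p-3 if black, namely the next unused
   integers; the son at position alpha nu (leftmost = 1) is black, the others
   white. *)
Fixpoint build (p : nat) (alpha : nat -> nat) (n : nat) : seq bool :=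
  match n with
  | 0 => [:: true]
  | n'.+1 =>
      let cs := build p alpha n' in
      let k := if nth true cs n' then p - 2 else p - 3 in
      cs ++ [seq (i.+1 != alpha n) | i <- iota 0 k]
  end.

Definition is_white (p : nat) (alpha : nat -> nat) (x : nat) : bool :=
  nth true (build p alpha x) x.-1.

Definition sons (p : nat) (alpha : nat -> nat) (nu : nat) : seq nat :=
  iota (size (build p alpha nu.-1)).+1
       (size (build p alpha nu) - size (build p alpha nu.-1)).

Definition assignment (p : nat) (alpha : nat -> nat) : Prop :=
  forall nu, 0 < nu -> 0 < alpha nu <= size (sons p alpha nu).

Definition preferred_son (p : nat) (alpha : nat -> nat) (nu s : nat) : Prop :=
  [/\ s \in sons p alpha nu, code_ends0 p s
    & forall w, is_metallic_code p nu w -> is_metallic_code p s (rcons w 0)].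

Definition preferred_son_property (p : nat) (alpha : nat -> nat) : Prop :=
  forall nu, 0 < nu ->
    exists s, preferred_son p alpha nu s /\
      (forall s', s' \in sons p alpha nu -> code_ends0 p s' -> s' = s).

From mathcomp Require Import all_boot zify.
Set Implicit Arguments. Unset Strict Implicit. Unset Printing Implicit Defensive.

(* Once nodes 1..n have received their sons, the largest node is
   tree_size n = 1 + (p-2) n - B n, where B n counts the black nodes among
   1..n: every node gets p - 2 sons, one fewer if it is black, and every
   processed node has exactly one black son.  The sons of node n > 0 are thus
   tree_size (n-1) + 1, ..., tree_size n.  If u a is the metallic code of n,
   the recurrence m_(i+1) + m_(i-1) = (p-2) m_i shows that appending 0 gives
   the value (p-2) n - value u, and a strong induction on n, applied to the
   node value u, bounds B well enough to place this value among the sons of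
   n.  Since these intervals are disjoint and metallic codes are unique (by
   the greedy bounds on admissible words), no other son has a code ending
   with 0.  Finally 1 0^n is the metallic code of m_n. *)

Section MetallicNumbers.

Variable p : nat.

Lemma metal0 : metal p 0 = 1.
Proof. by []. Qed.

Lemma metal_pair_fstS n : (metal_pair p n.+1).1 = metal p n.
Proof. by rewrite /metal /=; case: (metal_pair p n). Qed.

Hypothesis p_ge5 : 5 <= p.

Lemma metal_pair_double n : 2 * (metal_pair p n).1 <= (metal_pair p n).2.
Proof.
elim: n => //= n; case: (metal_pair p n) => a b /= IH.
have : 3 * b <= (p - 2) * b by apply: leq_mul => //; lia.
lia.
Qed.

Lemma metal_double n : 2 * metal p n <= metal p n.+1.
Proof. by rewrite -metal_pair_fstS; apply: metal_pair_double. Qed.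

Lemma metal_gt0 n : 0 < metal p n.
Proof. by elim: n => // n IH; have := metal_double n; lia. Qed.

Lemma metal_ltnS n : metal p n < metal p n.+1.
Proof. by have := metal_double n; have := metal_gt0 n; lia. Qed.

Lemma leq_metal : {homo metal p : i j / i <= j}.
Proof.
apply: homo_leq => [//|j i k|i]; first exact: leq_trans.
exact: ltnW (metal_ltnS i).
Qed.

Lemma metal_gtn n : n < metal p n.
Proof. by elim: n => // n IH; apply: leq_ltn_trans IH (metal_ltnS n). Qed.

Lemma metal_rec n : metal p n.+1 + (metal_pair p n).1 = (p - 2) * metal p n.
Proof.
rewrite /metal /=; have := metal_pair_double n; case: (metal_pair p n) => a b /=.
have : 3 * b <= (p - 2) * b by apply: leq_mul => //; lia.
lia.
Qed.

(* m_(n+1) - 1 is the value of the word d c^n. *)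
Lemma metal_sum n :
  metal p n.+1 = (p - 3) * metal p n + (p - 4) * \sum_(i < n) metal p i + 1.
Proof.
elim: n => [|n IH]; first by rewrite big_ord0 /metal /=; lia.
rewrite big_ord_recr /= mulnDr.
have := metal_rec n.+1; rewrite metal_pair_fstS.
rewrite (_ : p - 2 = (p - 3).+1) ?mulSn; last by lia.
move: IH; rewrite (_ : p - 3 = (p - 4).+1) ?mulSn; last by lia.
move: ((p - 4) * _) ((p - 4) * _) ((p - 4) * _); lia.
Qed.

End MetallicNumbers.

Fixpoint wvalue (f : nat -> nat) (w : seq nat) : nat :=
  if w is a :: w' then a * f (size w') + wvalue f w' else 0.

Section WordValues.

Implicit Types (f g : nat -> nat) (w : seq nat).

Lemma wvalue_rcons f w a : wvalue f (rcons w a) = wvalue (f \o succn) w + a * f 0.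
Proof. by elim: w => [|b w IH] /=; rewrite ?size_rcons ?IH; lia. Qed.

Lemma eq_wvalue f g : f =1 g -> wvalue f =1 wvalue g.
Proof. by move=> fg; elim=> //= a w ->; rewrite fg. Qed.

Lemma leq_wvalue f g w : (forall i, f i <= g i) -> wvalue f w <= wvalue g w.
Proof. by move=> fg; elim: w => //= a w IH; rewrite leq_add // leq_mul. Qed.

Lemma wvalueD f g w : wvalue (fun i => f i + g i) w = wvalue f w + wvalue g w.
Proof. by elim: w => //= a w ->; lia. Qed.

Lemma wvalueMn k f w : wvalue (fun i => k * f i) w = k * wvalue f w.
Proof. by elim: w => /= [|a w ->]; lia. Qed.

Lemma wvalue_nseq0 f n : wvalue f (nseq n 0) = 0.
Proof. by elim: n. Qed.

Lemma word_valueE p w : word_value p w = wvalue (metal p) w.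
Proof.
elim: w => [|a w IH]; first by rewrite /word_value big_ord0.
rewrite /word_value /= rev_cons big_ord_recr /= nth_rcons size_rev ltnn eqxx.
rewrite -IH /word_value addnC; congr (_ + _); apply: eq_bigr => i _.
by rewrite nth_rcons size_rev ltn_ord.
Qed.

End WordValues.

Section MetallicValues.

Variable p : nat.

Local Notation value := (wvalue (metal p)).

Lemma value_rcons w a : value (rcons w a) = value (rcons w 0) + a.
Proof. by rewrite !wvalue_rcons metal0; lia. Qed.

Hypothesis p_ge5 : 5 <= p.

Lemma value_rcons0_double w : 2 * value w <= value (rcons w 0).
Proof.
rewrite wvalue_rcons mul0n addn0 -wvalueMn; apply: leq_wvalue => i.
exact: metal_double.
Qed.

Lemma value_rcons0_rec w a :
  value (rcons (rcons w a) 0) + value w = (p - 2) * value (rcons w a).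
Proof.
have -> : value w = wvalue (fun i => (metal_pair p i).1) (rcons w a).
  by rewrite wvalue_rcons muln0 addn0; apply: eq_wvalue => i /=; rewrite metal_pair_fstS.
rewrite wvalue_rcons mul0n addn0 -wvalueD -wvalueMn.
by apply: eq_wvalue => i; rewrite /= metal_rec.
Qed.

End MetallicValues.

(* [pending] records that the digits read so far end with a factor d c^j,
   which a further digit d would turn into a forbidden factor. *)
Fixpoint admissible (p : nat) (pending : bool) (w : seq nat) : bool :=
  if w is a :: w' then
    if a == p - 3 then ~~ pending && admissible p true w'
    else if a == p - 4 then admissible p pending w'
    else admissible p false w'
  else true.

Definition cd_prefix (p : nat) (w : seq nat) : Prop :=
  exists j, prefix (rcons (nseq j (p - 4)) (p - 3)) w.

Section ForbiddenFactors.

Variable p : nat.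
Implicit Types (w : seq nat) (s : bool).

Lemma cd_prefix_cons a w :
  cd_prefix p (a :: w) <-> a = p - 3 \/ a = p - 4 /\ cd_prefix p w.
Proof.
split.
- case=> -[/andP [/eqP <- _]|j /andP [/eqP <- pre]]; first by left.
  by right; split; last exists j.
- case=> [->|[-> [j pre]]]; first by exists 0; rewrite /= eqxx prefix0s.
  by exists j.+1; rewrite /= eqxx.
Qed.

Lemma forbidden_cons a w : has_forbidden_factor p (a :: w) <->
  a = p - 3 /\ cd_prefix p w \/ has_forbidden_factor p w.
Proof.
split.
- case=> j; rewrite infix_consl /= => /orP [/andP [/eqP <- pre]|inf].
    by left; split; last exists j.
  by right; exists j.
- case=> [[-> [j pre]]|[j inf]]; exists j; rewrite infix_consl.
    by rewrite /= eqxx pre.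
  by rewrite inf orbT.
Qed.

Hypothesis p_ge4 : 4 <= p.

Lemma admissibleP s w :
  admissible p s w <-> ~ has_forbidden_factor p w /\ (s -> ~ cd_prefix p w).
Proof.
elim: w s => [|a w IH] s /=.
  by split=> // _; split=> [[j]|_ [[]]].
rewrite forbidden_cons cd_prefix_cons.
have dc : p - 4 <> p - 3 by lia.
case: eqP => [->|ad]; last case: eqP => [->|ac].
- by case: s; rewrite /= ?IH; intuition.
- by rewrite IH; intuition.
- by rewrite IH; intuition.
Qed.

End ForbiddenFactors.

Section AdmissibleWords.

Variable p : nat.
Implicit Types (w : seq nat) (s : bool).

Lemma admissible_false s w : admissible p s w -> admissible p false w.
Proof.
elim: w s => //= a w IH s.
by case: ifP => _; [case/andP | case: ifP => // _ /IH].
Qed.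

Lemma admissible_behead s a w : admissible p s (a :: w) -> admissible p false w.
Proof.
rewrite /=; case: ifP => _; first by case/andP => _ /admissible_false.
by case: ifP => _ // /admissible_false.
Qed.

Lemma admissible_catl s u v : admissible p s (u ++ v) -> admissible p s u.
Proof.
elim: u s => //= a u IH s.
by case: ifP => _; [case/andP => -> /IH | case: ifP => _ /IH].
Qed.

Hypothesis p_ge5 : 5 <= p.

Lemma admissible_cat_nseq0 s w k : admissible p s w -> admissible p s (w ++ nseq k 0).
Proof.
have [d0 c0] : (0 == p - 3) = false /\ (0 == p - 4) = false by split; apply/eqP; lia.
elim: w s => [|a w IH] s /=.
  by elim: k s => //= k IH s _; rewrite d0 c0; apply: IH.
by case: ifP => _; [case/andP => -> /IH | case: ifP => _ /IH].
Qed.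

End AdmissibleWords.

(* The largest value of an admissible word of length k: (metal p k).-1, reached
   by d c^(k-1), or, when pending, (p-4) (m_0 + ... + m_(k-1)), reached by c^k. *)
Definition adm_bound (p : nat) (pending : bool) (k : nat) : nat :=
  if pending then (p - 4) * \sum_(i < k) metal p i else (metal p k).-1.

Definition metallic_codeb (p n : nat) (w : seq nat) : bool :=
  [&& all (fun a => a <= p - 3) w, head 0 w != 0,
      wvalue (metal p) w == n & admissible p false w].

Section Codes.

Variable p : nat.
Hypothesis p_ge5 : 5 <= p.
Implicit Types (w : seq nat) (s : bool).

Local Notation value := (wvalue (metal p)).
Local Notation digits := (all (fun a => a <= p - 3)).

Lemma adm_boundS s k : adm_bound p s k.+1 =
  (if s then p - 4 else p - 3) * metal p k + (p - 4) * \sum_(i < k) metal p i.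
Proof.
rewrite /adm_bound big_ord_recr metal_sum // mulnDr addn1.
by case: s => /=; rewrite addnC.
Qed.

Lemma admissible_value_le s w : digits w -> admissible p s w ->
  value w <= adm_bound p s (size w).
Proof.
elim: w s => [|a w IH] s /=; first by case: s; rewrite /adm_bound ?big_ord0.
case/andP => ad dw; rewrite adm_boundS.
have := metal_gt0 p_ge5 (size w); set m := metal p (size w) => m_gt0.
have := IH false dw; have := IH true dw; rewrite /adm_bound -/m.
move: (_ * \sum_(_ < _) _) => S le_pending le_free.
have cm : (p - 3) * m = (p - 4) * m + m.
  by rewrite (_ : p - 3 = (p - 4).+1) ?mulSn 1?addnC; last by lia.
case: eqP => [->|nd]; first by case: s => //= /le_pending; lia.
case: eqP => [->|nc]; first by case: s => [/le_pending|/le_free]; lia.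
have : a * m + m <= (p - 4) * m by rewrite addnC -mulSn leq_mul //; lia.
by move=> ? /le_free; case: s; lia.
Qed.

Lemma admissible_value_surj s k n : n <= adm_bound p s k ->
  exists w, [/\ size w = k, digits w, admissible p s w & value w = n].
Proof.
elim: k s n => [|k IH] s n.
  by case: s; rewrite /adm_bound ?big_ord0 ?muln0 leqn0 => /eqP ->; exists [::].
have [top [top_le bound_eq adm_top adm_lt]] : exists top, [/\ top <= p - 3,
    adm_bound p s k.+1 = top * metal p k + adm_bound p true k,
    forall u, admissible p true u -> admissible p s (top :: u)
  & forall q u, q < top -> admissible p false u -> admissible p s (q :: u)].
  exists (if s then p - 4 else p - 3); rewrite adm_boundS.
  case: s; split=> //=; try lia.
  - by move=> u; rewrite ifN_eq ?eqxx //; apply/eqP; lia.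
  - by move=> q u q_lt; rewrite !ifN_eq //; apply/eqP; lia.
  - by move=> u; rewrite eqxx.
  - by move=> q u q_lt; rewrite ifN_eq; [case: ifP | apply/eqP; lia].
rewrite bound_eq; set m := metal p k; have m_gt0 : 0 < m := metal_gt0 p_ge5 k.
case: (leqP (top * m) n) => [n_ge|n_lt] n_le.
  have [|u [su du au vu]] := IH true (n - top * m); first by lia.
  by exists (top :: u); split; rewrite ?adm_top //= ?su ?top_le //; lia.
have q_lt : n %/ m < top by rewrite ltn_divLR.
have [|u [su du au vu]] := IH false (n %% m).
  by have := ltn_pmod n m_gt0; rewrite /adm_bound; lia.
exists (n %/ m :: u); split; rewrite ?adm_lt //= ?su ?vu -?divn_eq //.
by rewrite du; lia.
Qed.

Lemma admissible_inj u v : digits u -> admissible p false u ->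
  digits v -> admissible p false v -> size u = size v -> value u = value v -> u = v.
Proof.
elim: u v => [|a u IH] [|b v] //= /andP [_ du] /admissible_behead au
  /andP [_ dv] /admissible_behead av [suv]; rewrite -suv.
have := admissible_value_le du au; have := admissible_value_le dv av.
rewrite /adm_bound -suv; have := metal_gt0 p_ge5 (size u).
set m := metal p (size u) => m_gt0 le_v le_u eq_uv.
have lt_digit x y r t : x < y -> r < m -> x * m + r < y * m + t.
  move=> xy rm; have : x.+1 * m <= y * m by rewrite leq_mul2r xy orbT.
  by rewrite mulSn; lia.
case: (ltngtP a b) => [ab|ba|ab].
- by have := lt_digit _ _ (value u) (value v) ab; lia.
- by have := lt_digit _ _ (value v) (value u) ba; lia.
- by rewrite -ab in eq_uv *; congr (_ :: _); apply: IH => //; lia.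
Qed.

Lemma metallic_codeP n w : is_metallic_code p n w <-> metallic_codeb p n w.
Proof.
have adm := admissibleP (ltnW p_ge5) false w.
rewrite /is_metallic_code /metallic_codeb word_valueE; split.
- by case=> -> -> -> no_forbidden; rewrite eqxx /=; apply/adm.
- by case/and4P=> -> -> /eqP -> /adm [].
Qed.

Lemma metallic_code_size n w : metallic_codeb p n w ->
  metal p (size w).-1 <= n < metal p (size w).
Proof.
case/and4P=> dw + /eqP <- aw; have := admissible_value_le dw aw.
have := metal_gt0 p_ge5 (size w); rewrite /adm_bound.
case: w dw {aw} => [|a w] //= /andP [_ _] m_gt0 le_bound a_neq0.
have : 1 * metal p (size w) <= a * metal p (size w).
  by rewrite leq_mul2r lt0n a_neq0 orbT.
lia.
Qed.

Lemma metallic_code_gt0 n w : metallic_codeb p n w -> 0 < n.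
Proof. by move/metallic_code_size; have := metal_gt0 p_ge5 (size w).-1; lia. Qed.

Lemma metallic_code_uniq n u v : metallic_codeb p n u -> metallic_codeb p n v -> u = v.
Proof.
move=> cu cv; have := metallic_code_size cu; have := metallic_code_size cv.
case/and4P: cu cv => du _ /eqP vu au /and4P [dv _ /eqP vv av] sv su.
apply: admissible_inj => //; last by rewrite vu vv.
case: (ltngtP (size u) (size v)) => // lt_size.
- by have := leq_metal p_ge5 (_ : size u <= (size v).-1); lia.
- by have := leq_metal p_ge5 (_ : size v <= (size u).-1); lia.
Qed.

Lemma metallic_code_exists n : 0 < n -> exists w, metallic_codeb p n w.
Proof.
have [|w [_ dw aw vw]] := @admissible_value_surj false n n.
  by have := metal_gtn p_ge5 n; rewrite /adm_bound; lia.
elim: w dw aw vw => [|a w IH] /=; first by move=> _ _ <-.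
case/andP=> ad dw aw vw n_gt0.
have [a0|a_neq0] := eqVneq a 0; last first.
  by exists (a :: w); rewrite /metallic_codeb /= ad dw a_neq0 vw eqxx.
apply: IH => //; last by rewrite -vw a0.
by move: aw; rewrite a0 /= !ifN_eq //; apply/eqP; lia.
Qed.

Lemma metallic_code_rcons0 n w :
  metallic_codeb p n w -> metallic_codeb p (value (rcons w 0)) (rcons w 0).
Proof.
case/and4P=> dw w0 _ aw; rewrite /metallic_codeb all_rcons dw eqxx -cats1.
by rewrite (admissible_cat_nseq0 p_ge5 1 aw) andbT; case: w w0 {dw aw} => //= a w ->.
Qed.

Lemma metallic_code_belast n u a : u != [::] ->
  metallic_codeb p n (rcons u a) -> metallic_codeb p (value u) u.
Proof.
move=> u0 /and4P [+ head_neq0 _]; rewrite all_rcons -cats1.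
move=> /andP [_ du] /admissible_catl au; rewrite /metallic_codeb du eqxx au andbT.
by case: u u0 head_neq0 {du au} => // b u _ /= ->.
Qed.

Lemma metallic_code_metal n : metallic_codeb p (metal p n) (1 :: nseq n 0).
Proof.
rewrite /metallic_codeb /= all_nseq orbT wvalue_nseq0 size_nseq mul1n addn0 eqxx.
rewrite ifN_eq; last by apply/eqP; lia.
have adm0 : admissible p false (nseq n 0).
  exact: (admissible_cat_nseq0 p_ge5 n (w := [::])).
by rewrite if_same adm0 andbT; lia.
Qed.

Lemma metal_code_rcons0 n : rcons (1 :: nseq n 0) 0 = 1 :: nseq n.+1 0.
Proof. by rewrite rcons_cons -cats1 -(addn1 n) nseqD. Qed.

End Codes.

(* [tree_size p alpha n] is the largest node once nodes 1, ..., n have received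
   their sons, [nsons p alpha n] is the number of sons of node n.+1, and
   [nblack p alpha t] counts the black nodes among 1, ..., t. *)
Definition tree_size (p : nat) (alpha : nat -> nat) (n : nat) : nat :=
  size (build p alpha n).

Definition nsons (p : nat) (alpha : nat -> nat) (n : nat) : nat :=
  if nth true (build p alpha n) n then p - 2 else p - 3.

Definition nblack (p : nat) (alpha : nat -> nat) (t : nat) : nat :=
  count negb (take t (build p alpha t)).

Section WhiteMetallicTree.

Variables (p : nat) (alpha : nat -> nat).

Local Notation build := (build p alpha).
Local Notation tree_size := (tree_size p alpha).
Local Notation nsons := (nsons p alpha).
Local Notation nblack := (nblack p alpha).
Local Notation sons := (sons p alpha).

Lemma buildS n :
  build n.+1 = build n ++ [seq i.+1 != alpha n.+1 | i <- iota 0 (nsons n)].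
Proof. by []. Qed.

Lemma tree_size0 : tree_size 0 = 1.
Proof. by []. Qed.

Lemma tree_sizeS n : tree_size n.+1 = tree_size n + nsons n.
Proof. by rewrite /tree_size buildS size_cat size_map size_iota. Qed.

Lemma nsons_bounds n : p - 3 <= nsons n <= p - 2.
Proof. by rewrite /nsons; case: ifP => _; lia. Qed.

Lemma leq_tree_size : {homo tree_size : i j / i <= j}.
Proof.
apply: homo_leq => [//|j i k|i]; first exact: leq_trans.
by rewrite tree_sizeS leq_addr.
Qed.

Lemma build_prefix m n : m <= n -> exists r, build n = build m ++ r.
Proof.
move/subnKC <-; elim: (n - m) => [|k [r IH]]; first by exists [::]; rewrite addn0 cats0.
by rewrite addnS buildS IH -catA; eexists.
Qed.

Lemma mem_sons n s : 0 < n ->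
  (s \in sons n) = (tree_size n.-1 < s <= tree_size n).
Proof.
case: n => // n _; rewrite /sons mem_iota -!/(tree_size _) tree_sizeS.
by rewrite addKn addSn ltnS.
Qed.

Lemma mem_sons_inj m n s : 0 < m -> 0 < n -> s \in sons m -> s \in sons n -> m = n.
Proof.
move=> m_gt0 n_gt0; rewrite !mem_sons // => /andP [lt_m le_m] /andP [lt_n le_n].
have := @leq_tree_size m n.-1; have := @leq_tree_size n m.-1; lia.
Qed.

Hypothesis p_ge5 : 5 <= p.

Lemma tree_size_gtn n : n < tree_size n.
Proof. by elim: n => // n IH; rewrite tree_sizeS; have := nsons_bounds n; lia. Qed.

Lemma nblackS n : nblack n.+1 = nblack n + ~~ nth true (build n) n.
Proof.
have lt_n := tree_size_gtn n.
by rewrite /nblack buildS takel_cat // (take_nth true lt_n) -cats1 count_cat /= addn0.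
Qed.

Lemma tree_size_nblack n : tree_size n + nblack n = 1 + (p - 2) * n.
Proof.
elim: n => [|n IH]; first by rewrite muln0.
rewrite tree_sizeS nblackS mulnS; move: IH; rewrite /nsons.
by case: (nth true (build n) n) => /=; lia.
Qed.

Hypothesis alpha_assignment : assignment p alpha.

Lemma count_black_build n : count negb (build n) = n.
Proof.
elim: n => // n IH; rewrite buildS count_cat IH count_map.
have := alpha_assignment (ltn0Sn n).
rewrite /sons size_iota -!/(tree_size _) tree_sizeS addKn => alpha_bounds.
rewrite (eq_count (a2 := pred1 (alpha n.+1) \o succn)) => [|i]; last by rewrite /= negbK.
rewrite -count_map -(iotaDl 1 0) count_uniq_mem ?iota_uniq // mem_iota.
by rewrite alpha_bounds addn1.
Qed.

Lemma nblack_ge y t : tree_size y <= t -> y <= nblack t.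
Proof.
move=> le_t; have le_yt : y <= t by have := tree_size_gtn y; lia.
rewrite /nblack; have [r ->] := build_prefix le_yt; rewrite take_cat ltnNge le_t /=.
by rewrite count_cat count_black_build leq_addr.
Qed.

Lemma nblack_le y t : t <= tree_size y -> nblack t <= y.
Proof.
move=> le_t; have [le_ty|lt_yt] := leqP t y.
  by apply: leq_trans (count_size _ _) _; rewrite size_take_min; lia.
rewrite /nblack; have [r ->] := build_prefix (ltnW lt_yt); rewrite takel_cat //.
rewrite -[leqRHS](count_black_build y) -[in leqRHS](cat_take_drop t (build y)).
by rewrite count_cat leq_addr.
Qed.

End WhiteMetallicTree.

Section PreferredSon.

Variables (p : nat) (alpha : nat -> nat).
Hypotheses (p_ge5 : 5 <= p) (alpha_assignment : assignment p alpha).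

Local Notation value := (wvalue (metal p)).
Local Notation tree_size := (tree_size p alpha).
Local Notation nblack := (nblack p alpha).

Lemma value_rcons0_range n w : metallic_codeb p n w ->
  tree_size n.-1 < value (rcons w 0) <= tree_size n.
Proof.
elim/ltn_ind: n w => n IH w cw.
have [m def_n] : exists m, n = m.+1.
  by exists n.-1; rewrite prednK // (metallic_code_gt0 p_ge5 cw).
subst n; rewrite -[m.+1.-1]/m; case/lastP: w cw => [|u a] cw; first by case/and4P: cw.
have /and4P [+ _ /eqP val_w _] := cw; rewrite all_rcons => /andP [a_le _].
have rec := value_rcons0_rec p_ge5 u a; rewrite val_w mulnS in rec.
have split_w := value_rcons p u a; rewrite val_w in split_w.
have key_m := tree_size_nblack alpha p_ge5 m.
have := tree_size_nblack alpha p_ge5 m.+1; rewrite mulnS => key_Sm.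
move: ((p - 2) * m) rec key_m key_Sm => P rec key_m key_Sm.
have [u_nil | u_nil] := eqVneq u [::].
  have : nblack m.+1 <= 1.
    apply: (nblack_le p_ge5 alpha_assignment); rewrite tree_sizeS tree_size0.
    by have := nsons_bounds p alpha 0; move: split_w; rewrite u_nil /=; lia.
  by move: rec; rewrite u_nil /=; lia.
have cu := metallic_code_belast u_nil cw; have u_gt0 := metallic_code_gt0 p_ge5 cu.
have := value_rcons0_double p_ge5 u; move: (value u) cu u_gt0 rec => x cu x_gt0 rec le_x.
have x_lt : x < m.+1 by lia.
have /andP [lt_x le_x'] := IH x x_lt u cu.
have : nblack m.+1 <= x.+1.
  apply: (nblack_le p_ge5 alpha_assignment); rewrite tree_sizeS.
  by have := nsons_bounds p alpha x; lia.
have : x.-1 <= nblack m by apply: (nblack_ge p_ge5 alpha_assignment); lia.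
lia.
Qed.

Lemma value_rcons0_in_sons n w : metallic_codeb p n w ->
  value (rcons w 0) \in sons p alpha n.
Proof.
by move=> cw; rewrite mem_sons ?value_rcons0_range ?(metallic_code_gt0 p_ge5 cw).
Qed.

Lemma preferred_son_rcons0 n w : metallic_codeb p n w ->
  preferred_son p alpha n (value (rcons w 0)).
Proof.
move=> cw; have cw0 := metallic_code_rcons0 p_ge5 cw; split.
- exact: value_rcons0_in_sons.
- by exists (rcons w 0); rewrite metallic_codeP // last_rcons.
- move=> w' /(metallic_codeP p_ge5) cw'.
  by rewrite (metallic_code_uniq p_ge5 cw' cw) metallic_codeP.
Qed.

Lemma son_ends0_eq n w s : metallic_codeb p n w ->
  s \in sons p alpha n -> code_ends0 p s -> s = value (rcons w 0).
Proof.
move=> cw s_son [+ []] => + /(metallic_codeP p_ge5).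
case/lastP => [|u b] cs; first by case/and4P: cs.
rewrite last_rcons => b0; move: cs; rewrite b0 => cs.
have u_nil : u != [::] by apply: contraTneq cs => ->.
have cu := metallic_code_belast u_nil cs.
have val_s : value (rcons u 0) = s by case/and4P: cs => _ _ /eqP.
have := value_rcons0_in_sons cu; rewrite val_s => s_son'.
have u_gt0 := metallic_code_gt0 p_ge5 cu; have n_gt0 := metallic_code_gt0 p_ge5 cw.
have eq_n := mem_sons_inj u_gt0 n_gt0 s_son' s_son.
by rewrite -val_s eq_n in cu *; rewrite (metallic_code_uniq p_ge5 cu cw).
Qed.

End PreferredSon.

Theorem theorem7 (p : nat) (alpha : nat -> nat) :
  5 <= p -> assignment p alpha ->
  preferred_son_property p alpha /\
  (forall n : nat, preferred_son p alpha (metal p n) (metal p n.+1)).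
Proof.
move=> p_ge5 alpha_assignment; split.
- move=> n n_gt0; have [w cw] := metallic_code_exists p_ge5 n_gt0.
  exists (wvalue (metal p) (rcons w 0)).
  split; first exact: preferred_son_rcons0.
  by move=> s; apply: son_ends0_eq.
- move=> n; have := metallic_code_metal p_ge5 n.
  move/(preferred_son_rcons0 p_ge5 alpha_assignment); rewrite metal_code_rcons0.
  by case/and4P: (metallic_code_metal p_ge5 n.+1) => _ _ /eqP ->.
Qed.
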